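(* Let $\mathscr{A}$ be a $C^*$-algebra with identity such that the set $\mathscr{A}'_m$ of all linear multiplicative functionals $\varphi\colon\mathscr{A}\to\mathbb{C}$ is total (i.e., if $\varphi(a)=0$ for all $\varphi\in\mathscr{A}'_m$ then $a=0$). Let $\mathscr{X}$ be a right $\mathscr{A}$-module which is also a normed space. Let $n\geq 2$ and let $E, F\colon \mathscr{X}^n\to\mathscr{A}$ be multi-$\mathscr{A}$-linear functions, and assume that $E$ is bounded and strong. Suppose that for all $x_1,\dots,x_n\in\mathscr{X}$, $E(x_1,\dots,x_n)=0$ implies $F(x_1,\dots,x_n)=0$. Then the following are equivalent: (i) there exists $z\in\mathscr{X}$ such that both $E(z,\dots,z)$ and $F(z,\dots,z)$ belong to $G_{\mathscr{A}}$; (ii) for all $z_1,\dots,z_n\in\mathscr{X}$, $E(z_1,\dots,z_n)\in G_{\mathscr{A}}$ implies $F(z_1,\dots,z_n)\in G_{\mathscr{A}}$.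
   Context: $G_{\mathscr{A}}$ denotes the set of invertible elements of $\mathscr{A}$. A right $\mathscr{A}$-module $\mathscr{X}$ is a complex vector space with a right $\mathscr{A}$-action satisfying $(\alpha x)a=x(\alpha a)=\alpha(xa)$. A function $F\colon\mathscr{X}^n\to\mathscr{A}$ is multi-$\mathscr{A}$-linear if for all $x_1,\dots,x_n,y_j\in\mathscr{X}$, $\alpha\in\mathbb{C}$, $a\in\mathscr{A}$ and $j=1,\dots,n$: (A) $F$ is additive in the $j$-th variable; (B) $F(x_1,\dots,\alpha x_j a,\dots,x_n)=\alpha F(x_1,\dots,x_n)a$ if $j$ is even; (C) $F(x_1,\dots,\alpha x_j a,\dots,x_n)=\overline{\alpha}a^*F(x_1,\dots,x_n)$ if $j$ is odd. $F$ is bounded if there is $M$ with $\|F(x_1,\dots,x_n)\|\le M\|x_1\|\cdots\|x_n\|$ for all $x_i$. $F$ is strong if there exists $w\in\mathscr{X}$ with $F(w,w,\dots,w)\in G_{\mathscr{A}}$. *)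

From HB Require Import structures.
From mathcomp Require Import all_boot all_order all_algebra.
From mathcomp Require Import reals.
From mathcomp.real_closed Require Import complex.
Set Implicit Arguments. Unset Strict Implicit. Unset Printing Implicit Defensive.
Import Order.TTheory GRing.Theory Num.Theory.
Local Open Scope ring_scope.

Section Defs.
Variable R : realType.
Local Notation C := (R[i]).
Definition cabs (c : C) : R := ComplexField.Normc.normc c.
Definition cconj (c : C) : C := complex.conjc c.

Definition is_norm (V : lmodType C) (N : V -> R) : Prop :=
  [/\ forall x, 0 <= N x,
      forall x, N x = 0 -> x = 0,
      forall x y, N (x + y) <= N x + N y &
      forall (c : C) x, N (c *: x) = cabs c * N x].

Definition norm_complete (V : lmodType C) (N : V -> R) : Prop :=
  forall u : nat -> V,
    (forall e : R, 0 < e -> exists M : nat, forall m k, (M <= m)%N -> (M <= k)%N ->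
        N (u m - u k) < e) ->
    exists l : V, forall e : R, 0 < e -> exists M : nat, forall m, (M <= m)%N ->
        N (u m - l) < e.

Definition is_cstar_algebra (A : algType C) (star : A -> A) (N : A -> R) : Prop :=
  [/\ is_norm N, norm_complete N &
      forall a b : A, N (a * b) <= N a * N b] /\
  [/\ forall a b : A, star (a + b) = star a + star b,
      forall (c : C) (a : A), star (c *: a) = cconj c *: star a,
      forall a b : A, star (a * b) = star b * star a,
      forall a : A, star (star a) = a &
      forall a : A, N (star a * a) = N a ^+ 2].

Definition lin_mult_functional (A : algType C) (phi : A -> C) : Prop :=
  [/\ forall a b : A, phi (a + b) = phi a + phi b,
      forall (c : C) (a : A), phi (c *: a) = c * phi a &
      forall a b : A, phi (a * b) = phi a * phi b].

Definition mult_functionals_total (A : algType C) : Prop :=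
  forall a : A, (forall phi : A -> C, lin_mult_functional phi -> phi a = 0) -> a = 0.

Definition invertible (A : algType C) (a : A) : Prop :=
  exists b : A, a * b = 1 /\ b * a = 1.

Definition is_right_module (A : algType C) (X : lmodType C) (act : X -> A -> X) : Prop :=
  [/\ forall x y a, act (x + y) a = act x a + act y a,
      forall x a b, act x (a + b) = act x a + act x b,
      forall x a b, act x (a * b) = act (act x a) b,
      forall x, act x 1 = x &
      forall (c : C) x a, act (c *: x) a = act x (c *: a) /\
                          act x (c *: a) = c *: act x a].

Definition upd (X : Type) (n : nat) (x : 'I_n -> X) (j : 'I_n) (y : X) : 'I_n -> X :=
  fun k => if k == j then y else x k.

(* multi-A-linearity. Variables are indexed by 'I_n = {0,..,n-1}; the
   paper's j-th variable (1-based) is index j-1, so "j even" in the paper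
   means odd index here, "j odd" means even index. *)
Definition multi_A_linear (A : algType C) (star : A -> A) (X : lmodType C)
    (act : X -> A -> X) (n : nat) (F : ('I_n -> X) -> A) : Prop :=
  forall (x : 'I_n -> X) (j : 'I_n),
    [/\ forall y z : X, F (upd x j (y + z)) = F (upd x j y) + F (upd x j z),
        ~~ odd j -> forall (c : C) (a : A),
          F (upd x j (act (c *: x j) a)) = cconj c *: (star a * F x) &
        odd j -> forall (c : C) (a : A),
          F (upd x j (act (c *: x j) a)) = c *: (F x * a)].

Definition bounded_multi (A : algType C) (NA : A -> R) (X : lmodType C) (NX : X -> R)
    (n : nat) (F : ('I_n -> X) -> A) : Prop :=
  exists M : R, forall x : 'I_n -> X, NA (F x) <= M * \prod_(i < n) NX (x i).

Definition strong_multi (A : algType C) (X : lmodType C) (n : nat)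
    (F : ('I_n -> X) -> A) : Prop :=
  exists w : X, invertible (F (fun _ => w)).
End Defs.

From HB Require Import structures.
From mathcomp Require Import all_boot all_order all_algebra.
From mathcomp Require Import reals.
From mathcomp.real_closed Require Import complex.
From Stdlib Require Import FunctionalExtensionality.
Set Implicit Arguments. Unset Strict Implicit. Unset Printing Implicit Defensive.
Import Order.TTheory GRing.Theory Num.Theory.
Local Open Scope ring_scope.

(* The total family of characters makes A commutative.  If x' differs from x
   only in the j-th coordinate, a suitable A-combination y of x_j and x'_j
   kills E(x with x_j := y), hence also F there, and this yields
   F(x) E(x') = F(x') E(x).  Given z with u = E(z,...,z) and c = F(z,...,z)
   invertible, H = F u - c E is additive in each variable, satisfies the same
   relation with E and vanishes at (z,...,z); replacing the coordinates of an
   arbitrary x by z one at a time, these relations and the cancellability of u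
   force H = 0.  Thus F(x) u = c E(x), and invertibility passes from E(x) to
   F(x). *)

Lemma upd_upd (X : Type) n (x : 'I_n -> X) j a b : upd (upd x j a) j b = upd x j b.
Proof. by apply: functional_extensionality => i; rewrite /upd; case: eqP. Qed.

Lemma upd_id (X : Type) n (x : 'I_n -> X) j : upd x j (x j) = x.
Proof. by apply: functional_extensionality => i; rewrite /upd; case: eqP => [->|]. Qed.

Definition multi_additive (X A : nmodType) n (E : ('I_n -> X) -> A) : Prop :=
  forall x j y z, E (upd x j (y + z)) = E (upd x j y) + E (upd x j z).

Definition proportional_on_lines (X : Type) (A : pzRingType) n
    (E F : ('I_n -> X) -> A) : Prop :=
  forall x j v, F x * E (upd x j v) = F (upd x j v) * E x.

Lemma multi_additive_comb (X : nmodType) (A : pzRingType) n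
    (E F : ('I_n -> X) -> A) (u c : A) :
  multi_additive E -> multi_additive F ->
  multi_additive (fun x => F x * u - c * E x).
Proof.
move=> addE addF x j y z.
by rewrite addE addF mulrDl mulrDr opprD addrACA.
Qed.

Lemma proportional_comb (X : Type) (A : pzRingType) n (E F : ('I_n -> X) -> A)
    (u c : A) :
  commutative (@GRing.mul A) -> proportional_on_lines E F ->
  proportional_on_lines E (fun x => F x * u - c * E x).
Proof.
move=> mulC EF x j v; rewrite !mulrBl -!mulrA [u * _]mulC [u * E x]mulC !mulrA EF.
by rewrite -!mulrA [E (upd _ _ _) * E x]mulC.
Qed.

Section Vanishing.
Variables (X : nmodType) (A : pzRingType) (n : nat) (w : X).
Variables (E H : ('I_n -> X) -> A).
Hypotheses (E_add : multi_additive E) (H_add : multi_additive H).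
Hypothesis EH : proportional_on_lines E H.

Definition pad (x : 'I_n -> X) (S : {set 'I_n}) : 'I_n -> X :=
  fun i => if i \in S then x i else w.

Lemma pad_set0 x : pad x set0 = fun=> w.
Proof. by apply: functional_extensionality => i; rewrite /pad inE. Qed.

Lemma pad_setT x : pad x setT = x.
Proof. by apply: functional_extensionality => i; rewrite /pad inE. Qed.

Lemma pad_at x (S : {set 'I_n}) k : k \in S -> pad x S k = x k.
Proof. by rewrite /pad => ->. Qed.

Lemma upd_pad_w x (S : {set 'I_n}) k : upd (pad x S) k w = pad x (S :\ k).
Proof.
by apply: functional_extensionality => i; rewrite /upd /pad !inE; case: eqP.
Qed.

Lemma upd_pad x (S : {set 'I_n}) k y : k \in S -> upd (pad x S) k y = pad (upd x k y) S.
Proof.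
move=> kS; apply: functional_extensionality => i; rewrite /upd /pad.
by case: eqP => [->|]; rewrite ?kS.
Qed.

(* Apply the last hypothesis to x with x_k replaced by x_k + w and expand
   both factors in the k-th variable. *)
Lemma pad_proportional_step (S U : {set 'I_n}) k : k \in S -> k \notin U ->
  (forall y, H (pad y (S :\ k)) = 0) ->
  (forall y, H (pad y S) * E (pad y (k |: U)) = 0) ->
  forall x, H (pad x S) * E (pad x U) = 0.
Proof.
move=> kS kU HSk HSkU x.
have kkU : k \in k |: U by rewrite setU11.
have HS : H (upd (pad x S) k (x k + w)) = H (pad x S).
  by rewrite H_add -{1}(pad_at x kS) upd_id upd_pad_w HSk addr0.
have ES : E (upd (pad x (k |: U)) k (x k + w)) = E (pad x (k |: U)) + E (pad x U).
  by rewrite E_add -{1}(pad_at x kkU) upd_id upd_pad_w setU1K.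
have := HSkU (upd x k (x k + w)).
by rewrite -(upd_pad _ _ kS) -(upd_pad _ _ kkU) HS ES mulrDr HSkU add0r.
Qed.

Lemma pad_proportional_eq0 (S : {set 'I_n}) j : j \in S ->
    (forall k y, k \in S -> H (pad y (S :\ k)) = 0) ->
  forall U : {set 'I_n}, U \subset S :\ j -> forall x, H (pad x S) * E (pad x U) = 0.
Proof.
move=> jS HS U; have [m] := ubnP #|(S :\ j) :\: U|.
elim: m U => // m IH U DU sU.
have [D0 | [k kD]] := set_0Vmem ((S :\ j) :\: U).
  have -> : U = S :\ j by apply/eqP; rewrite eqEsubset sU -setD_eq0 D0 eqxx.
  by move=> x; rewrite -upd_pad_w EH upd_pad_w HS // mul0r.
move: (kD); rewrite !inE => /and3P[kU _ kS].
apply: (pad_proportional_step kS kU (fun y => HS k y kS)); apply: IH.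
  have -> : (S :\ j) :\: (k |: U) = ((S :\ j) :\: U) :\ k.
    by apply/setP => i; rewrite !inE; case: (i == k).
  by move: DU; rewrite (cardsD1 k) kD.
by rewrite subUset sub1set (subsetP (subsetDl _ U)) ?sU.
Qed.

Lemma multi_additive_proportional_eq0 :
  GRing.rreg (E (fun=> w)) -> H (fun=> w) = 0 -> forall x, H x = 0.
Proof.
move=> Ew Hw.
have H_pad S x : H (pad x S) = 0.
  have [m] := ubnP #|S|; elim: m S x => // m IH S x cS.
  have [-> | [j jS]] := set_0Vmem S; first by rewrite pad_set0.
  apply: Ew; rewrite mul0r.
  have := pad_proportional_eq0 jS _ (sub0set _) x; rewrite pad_set0; apply.
  by move=> k y kS; apply: IH; move: cS; rewrite (cardsD1 k) kS.
by move=> x; rewrite -(pad_setT x).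
Qed.

End Vanishing.

Lemma mulC_of_mult_functionals_total (R : realType) (A : algType R[i]) :
  mult_functionals_total A -> commutative (@GRing.mul A).
Proof.
move=> htot a b; apply/eqP; rewrite -subr_eq0; apply/eqP; apply: htot.
by move=> phi [phiD phiZ phiM]; rewrite -scaleN1r phiD phiZ !phiM mulN1r mulrC subrr.
Qed.

Section Invertible.
Variables (R : realType) (A : algType R[i]).

Lemma invertibleM (a b : A) : invertible a -> invertible b -> invertible (a * b).
Proof.
move=> [a' [aa' a'a]] [b' [bb' b'b]]; exists (b' * a'); split.
  by rewrite mulrA -(mulrA a) bb' mulr1.
by rewrite mulrA -(mulrA b') a'a mulr1.
Qed.

Lemma invertibleMl (a b : A) : commutative (@GRing.mul A) ->
  invertible b -> invertible (a * b) <-> invertible a.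
Proof.
move=> mulC hb; split=> [[g [abg _]] | ha]; last exact: invertibleM.
by exists (b * g); rewrite mulrA abg mulC mulrA.
Qed.

Lemma invertible_rreg (a : A) : invertible a -> GRing.rreg a.
Proof.
move=> [a' [aa' _]] x y /(congr1 (fun t => t * a')).
by rewrite -!mulrA aa' !mulr1.
Qed.

End Invertible.

Section KernelInclusion.
Variables (R : realType) (A : algType R[i]) (star : A -> A).
Variables (X : lmodType R[i]) (act : X -> A -> X) (n : nat).
Hypotheses (mulC : commutative (@GRing.mul A)) (starK : involutive star).

Lemma multi_A_linear_additive (F : ('I_n -> X) -> A) :
  multi_A_linear star act F -> multi_additive F.
Proof. by move=> hF x j; case: (hF x j). Qed.

Definition conj_if_even (j : 'I_n) (a : A) : A := if odd j then a else star a.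

Lemma multi_A_linear_act (F : ('I_n -> X) -> A) : multi_A_linear star act F ->
  forall x j a, F (upd x j (act (x j) (conj_if_even j a))) = a * F x.
Proof.
move=> hF x j a; have [_ ev od] := hF x j; rewrite -[x j]scale1r /conj_if_even.
case: ifP => oj; first by rewrite od ?oj // scale1r mulC.
by rewrite ev ?oj // starK /cconj conjc1 scale1r mulC.
Qed.

Lemma proportional_of_kernel (E F : ('I_n -> X) -> A) :
  multi_A_linear star act E -> multi_A_linear star act F ->
  (forall x, E x = 0 -> F x = 0) -> proportional_on_lines E F.
Proof.
move=> hE hF hEF x j v; set x' := upd x j v.
pose y := act (x j) (conj_if_even j (E x')).
pose y' := act (x' j) (conj_if_even j (E x)).
have act_y G : multi_A_linear star act G -> G (upd x j y) = E x' * G x.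
  by move=> hG; rewrite multi_A_linear_act.
have act_y' G : multi_A_linear star act G -> G (upd x j y') = E x * G x'.
  by move=> hG; rewrite -(upd_upd x j v) multi_A_linear_act.
have act_sub G : multi_A_linear star act G ->
    G (upd x j (y - y')) = E x' * G x - E x * G x'.
  move=> hG; rewrite -act_y // -act_y' //.
  have := multi_A_linear_additive hG x j (y - y') y'.
  by rewrite subrK => ->; rewrite addrK.
have : F (upd x j (y - y')) = 0 by apply: hEF; rewrite act_sub // mulC subrr.
by rewrite act_sub // => /subr0_eq; rewrite ![_ * F _]mulC.
Qed.

End KernelInclusion.

Theorem corollary3p8 (R : realType) (A : algType R[i]) (star : A -> A) (NA : A -> R)
  (hA : is_cstar_algebra star NA) (htot : mult_functionals_total A)
  (X : lmodType R[i]) (act : X -> A -> X) (NX : X -> R)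
  (hmod : is_right_module act) (hnorm : is_norm NX)
  (n : nat) (hn : (2 <= n)%N) (E F : ('I_n -> X) -> A)
  (hE : multi_A_linear star act E) (hF : multi_A_linear star act F)
  (hEb : bounded_multi NA NX E) (hEs : strong_multi E)
  (hEF : forall x : 'I_n -> X, E x = 0 -> F x = 0) :
  (exists z : X, invertible (E (fun _ => z)) /\ invertible (F (fun _ => z))) <->
  (forall z : 'I_n -> X, invertible (E z) -> invertible (F z)).
Proof.
have mulC := mulC_of_mult_functionals_total htot.
have starK : involutive star by case: hA => _ [].
split=> [[z [hu hc]] x hEx | EF_inv]; last first.
  by case: hEs => w hw; exists w; split=> //; apply: EF_inv.
set u := E (fun=> z) in hu; set c := F (fun=> z) in hc.
have H0 : forall x, F x * u - c * E x = 0.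
  apply: (multi_additive_proportional_eq0 (w := z) (E := E)).
  - exact: multi_A_linear_additive hE.
  - by apply: multi_additive_comb; apply: multi_A_linear_additive.
  - exact: proportional_comb mulC (proportional_of_kernel mulC starK hE hF hEF).
  - exact: invertible_rreg.
  - by rewrite mulC subrr.
by rewrite -(invertibleMl _ mulC hu) (subr0_eq (H0 x)) invertibleMl.
Qed.
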